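(* Let $G$ and $H$ be connected graphs such that $G_{SR}$ and $H_{SR}$ are vertex-transitive. Then $$dim_s(G\square H)=\min\{|\partial(G)|\,dim_s(H),\ |\partial(H)|\,dim_s(G)\}.$$
   Context: Graphs are finite, simple, undirected; for connected $G$, $d_G$ is the shortest-path distance and $I_G[u,v]$ is the set of vertices lying on some shortest $u$–$v$ path. A vertex $w$ strongly resolves vertices $u,v$ if $v\in I_G[u,w]$ or $u\in I_G[v,w]$. A strong resolving set of $G$ is a set $S\subseteq V(G)$ such that every pair of vertices is strongly resolved by some vertex of $S$; $dim_s(G)$ is the minimum cardinality of such a set. A vertex $u$ is maximally distant from $v$ if $d_G(v,w)\le d_G(u,v)$ for every neighbor $w$ of $u$; distinct $u,v$ are mutually maximally distant if each is maximally distant from the other. The boundary $\partial(G)$ is the set of vertices mutually maximally distant with some vertex. The strong resolving graph $G_{SR}$ has vertex set $\partial(G)$, two vertices adjacent iff they are mutually maximally distant in $G$. $G\square H$ denotes the Cartesian product: vertex set $V(G)\times V(H)$, $(a,b)\sim(c,d)$ iff ($a=c$ and $bd\in E(H)$) or ($b=d$ and $ac\in E(G)$). *)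

From mathcomp Require Import all_boot all_order all_fingroup.
Set Implicit Arguments. Unset Strict Implicit. Unset Printing Implicit Defensive.

Section Graphs.
Variables (T : finType) (e : rel T).

Definition simple_graph : Prop := symmetric e /\ irreflexive e.

Definition connected_graph : Prop := forall x y : T, connect e x y.

Fixpoint ball (x : T) (n : nat) : {set T} :=
  if n is m.+1 then ball x m :|: [set y | [exists z in ball x m, e z y]]
  else [set x].

(* shortest-path distance: the least n with y within n steps of x
   (any walk-connected pair has distance < #|T|) *)
Definition dist (x y : T) : nat :=
  find (fun n => y \in ball x n) (iota 0 #|T|).

Definition interval (u v : T) : {set T} :=
  [set w | dist u w + dist w v == dist u v].

Definition strongly_resolves (w u v : T) : bool :=
  (v \in interval u w) || (u \in interval v w).

Definition strong_resolving_set (S : {set T}) : bool :=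
  [forall u, forall v, (u != v) ==> [exists w in S, strongly_resolves w u v]].

(* strong metric dimension: minimum cardinality of a strong resolving set
   (V(G) itself is one, so the default value #|T| is harmless) *)
Definition sdim : nat :=
  \big[minn/#|T|]_(S : {set T} | strong_resolving_set S) #|S|.

Definition max_distant (u v : T) : bool :=
  [forall w, e u w ==> (dist v w <= dist u v)].

Definition mutually_max_distant (u v : T) : bool :=
  [&& u != v, max_distant u v & max_distant v u].

Definition boundary : {set T} := [set u | [exists v, mutually_max_distant u v]].

(* G_SR has vertex set boundary and adjacency mutually_max_distant.
   Vertex-transitivity: for all x, y in boundary there is an automorphism of
   G_SR mapping x to y; an automorphism of G_SR is represented by a
   permutation of T that maps the boundary into (hence onto) itself and
   preserves (both ways) adjacency of G_SR on the boundary. *)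
Definition SR_automorphism (f : {perm T}) : Prop :=
  (forall a, a \in boundary -> f a \in boundary) /\
  (forall a b, a \in boundary -> b \in boundary ->
     mutually_max_distant (f a) (f b) = mutually_max_distant a b).

Definition SR_vertex_transitive : Prop :=
  forall x y, x \in boundary -> y \in boundary ->
    exists f : {perm T}, SR_automorphism f /\ f x = y.

End Graphs.

Definition cart_prod (T1 T2 : finType) (e1 : rel T1) (e2 : rel T2) : rel (T1 * T2) :=
  fun x y => ((x.1 == y.1) && e2 x.2 y.2) || ((x.2 == y.2) && e1 x.1 y.1).

From mathcomp Require Import all_boot all_order all_fingroup.
From mathcomp Require Import zify.
Set Implicit Arguments. Unset Strict Implicit. Unset Printing Implicit Defensive.

(* By Oellermann and Peters-Fransen, S strongly resolves G iff S is a vertex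
   cover of G_SR, so dim_s(G) = |∂G| - α(G_SR). Distances add up in G □ H, so
   two vertices are mutually maximally distant iff both pairs of coordinates
   are: (G □ H)_SR is the direct product G_SR × H_SR. Covers C × ∂H and
   ∂G × C' give the upper bound. For the lower bound, Zhang's argument bounds
   α(G_SR × H_SR) by max(α(G_SR)|∂H|, α(H_SR)|∂G|); it rests on the inequality
   |A| |V| <= α |N[A]| for independent sets A of a vertex-transitive graph,
   obtained by averaging over its automorphisms. *)

(** * Distances in a connected graph *)

Section Distance.
Variables (T : finType) (e : rel T).

Lemma mem_ball0 x y : (y \in ball e x 0) = (y == x).
Proof. by rewrite /= inE. Qed.

Lemma mem_ballS x n y :
  (y \in ball e x n.+1) = (y \in ball e x n) || [exists z in ball e x n, e z y].
Proof. by rewrite /= !inE. Qed.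

Lemma ball_center x n : x \in ball e x n.
Proof. by elim: n => [|n IH]; rewrite ?mem_ball0 ?mem_ballS ?IH. Qed.

Lemma ball_mono x m n : m <= n -> {subset ball e x m <= ball e x n}.
Proof.
move=> mn y; elim: n mn => [|n IH]; first by rewrite leqn0 => /eqP ->.
rewrite leq_eqVlt => /orP [/eqP -> //|]; rewrite ltnS => /IH H /H.
by rewrite mem_ballS => ->.
Qed.

Lemma ball_adj x y n z : y \in ball e x n -> e y z -> z \in ball e x n.+1.
Proof. by move=> Hy Hz; rewrite mem_ballS; apply/orP; right; apply/existsP; exists y; rewrite Hy. Qed.

Lemma ball_trans x y z m n :
  y \in ball e x m -> z \in ball e y n -> z \in ball e x (m + n).
Proof.
move=> Hy; elim: n z => [|n IH] z; first by rewrite mem_ball0 addn0 => /eqP ->.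
rewrite mem_ballS addnS => /orP [/IH /(ball_mono (leqnSn _)) //|].
by case/existsP => w /andP [/IH Hw Hwz]; apply: ball_adj Hw Hwz.
Qed.

Lemma ball_connect x y n : y \in ball e x n -> connect e x y.
Proof.
elim: n y => [|n IH] y; first by rewrite mem_ball0 => /eqP ->.
rewrite mem_ballS => /orP [/IH //|/existsP [z /andP [/IH Hz Hzy]]].
exact: connect_trans Hz (connect1 Hzy).
Qed.

Lemma path_last_ball x p : path e x p -> last x p \in ball e x (size p).
Proof.
elim/last_ind: p => [|p z IH]; first by rewrite /= inE.
rewrite rcons_path last_rcons size_rcons => /andP [/IH Hp Hz].
exact: ball_adj Hp Hz.
Qed.

Lemma connect_small_ball x y : connect e x y -> exists2 n, n < #|T| & y \in ball e x n.
Proof.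
case/connectP => p Hp ->; have [q Hq Huq _] := shortenP Hp.
exists (size q); last exact: path_last_ball.
by have := max_card (mem (x :: q)); rewrite (card_uniqP Huq).
Qed.

Hypothesis conn : connected_graph e.

Lemma dist_ball x y : y \in ball e x (dist e x y).
Proof.
rewrite /dist; set in_ball := fun n => y \in ball e x n.
have [n Hn Hy] := connect_small_ball (conn x y).
have Hhas : has in_ball (iota 0 #|T|) by apply/hasP; exists n; rewrite ?mem_iota.
have := nth_find 0 Hhas; rewrite nth_iota //.
by move: Hhas; rewrite has_find size_iota.
Qed.

Lemma dist_leE x y n : (dist e x y <= n) = (y \in ball e x n).
Proof.
apply/idP/idP => [le_dn | Hy]; first exact: ball_mono le_dn _ (dist_ball x y).
rewrite leqNgt; apply/negP => lt_nd.
have n_small : n < size (iota 0 #|T|) by apply: leq_trans lt_nd (find_size _ _).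
by have := before_find 0 lt_nd; rewrite nth_iota ?Hy // -(size_iota 0 #|T|).
Qed.

Lemma dist_xx x : dist e x x = 0.
Proof. by apply/eqP; rewrite -leqn0 dist_leE ball_center. Qed.

Lemma dist_eq0 x y : (dist e x y == 0) = (x == y).
Proof.
apply/idP/idP => [|/eqP ->]; last by rewrite dist_xx.
by rewrite -leqn0 dist_leE mem_ball0 eq_sym.
Qed.

Lemma dist_triangle x y z : dist e x z <= dist e x y + dist e y z.
Proof. by rewrite dist_leE; apply: ball_trans (dist_ball x y) (dist_ball y z). Qed.

Lemma dist_adj_le x y z : e y z -> dist e x z <= (dist e x y).+1.
Proof.
move=> Hyz; rewrite dist_leE -add1n addnC.
by apply: ball_trans (dist_ball x y) (ball_adj (ball_center y 0) Hyz).
Qed.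

Lemma dist_last_step x y n :
  dist e x y = n.+1 -> exists2 z, e z y & dist e x z = n.
Proof.
move=> Hd; have := dist_ball x y; rewrite Hd mem_ballS => /orP [|].
  by rewrite -dist_leE Hd ltnn.
case/existsP => z /andP [Hz Hzy]; exists z => //; apply/eqP.
by rewrite eqn_leq dist_leE Hz -ltnS -Hd dist_adj_le.
Qed.

Hypothesis se : symmetric e.

Lemma ball_sym x y n : y \in ball e x n -> x \in ball e y n.
Proof.
elim: n y => [|n IH] y; first by rewrite !mem_ball0 eq_sym.
rewrite mem_ballS => /orP [/IH /(ball_mono (leqnSn _)) //|].
case/existsP => z /andP [/IH Hz Hzy].
by rewrite -add1n; apply: ball_trans (ball_adj (ball_center y 0) _) Hz; rewrite se.
Qed.

Lemma dist_sym x y : dist e x y = dist e y x.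
Proof.
by apply/eqP; rewrite eqn_leq !dist_leE; apply/andP; split; apply/ball_sym/dist_ball.
Qed.

Hypothesis card_gt1 : 1 < #|T|.

Lemma exists_adj x : exists y, e x y.
Proof.
have [y Hyx] : exists y, y != x.
  apply/existsP; rewrite -negb_forall; apply/negP => /forallP all_x.
  suff : #|T| <= 1 by rewrite leqNgt card_gt1.
  by rewrite -(card1 x) subset_leq_card //; apply/subsetP => z _; rewrite inE all_x.
have : dist e y x != 0 by rewrite dist_eq0.
case Hd: (dist e y x) => [|n] // _.
by have [z Hzx _] := dist_last_step Hd; exists z; rewrite se.
Qed.

End Distance.

(** * Strong resolving sets as vertex covers of the strong resolving graph *)

Definition indep (T : finType) (r : rel T) (A : {set T}) : bool :=
  [forall a in A, forall b in A, ~~ r a b].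

Definition vertex_cover (T : finType) (r : rel T) (S : {set T}) : bool :=
  [forall u, forall v, r u v ==> (u \in S) || (v \in S)].

Section CoverIndep.
Variables (T : finType) (r : rel T) (V : {set T}).

Lemma indepP (A : {set T}) : reflect (forall a b, a \in A -> b \in A -> ~~ r a b) (indep r A).
Proof.
apply: (iffP forall_inP) => [H a b Ha Hb | H a Ha].
  exact: (forall_inP (H a Ha) b Hb).
by apply/forall_inP => b; apply: H.
Qed.

Lemma vertex_coverP (S : {set T}) :
  reflect (forall u v, r u v -> (u \in S) || (v \in S)) (vertex_cover r S).
Proof.
apply: (iffP forallP) => [H u v | H u]; first exact/implyP/(forallP (H u)).
by apply/forallP => v; apply/implyP/H.
Qed.

Lemma indep_setD_cover (S : {set T}) : vertex_cover r S -> indep r (V :\: S).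
Proof.
move/vertex_coverP=> Scov; apply/indepP => a b; rewrite !inE.
by case/andP=> /negbTE Sa _ /andP [/negbTE Sb _]; apply/negP => /Scov; rewrite Sa Sb.
Qed.

Hypothesis edges_in_V : forall u v, r u v -> (u \in V) && (v \in V).

Lemma cover_setD_indep (A : {set T}) : indep r A -> vertex_cover r (V :\: A).
Proof.
move/indepP=> Aind; apply/vertex_coverP => u v ruv.
have /andP [Vu Vv] := edges_in_V ruv; rewrite !inE Vu Vv !andbT -negb_and.
by apply: contraL ruv => /andP [Au Av]; apply: Aind.
Qed.

Lemma vertex_coverI (S : {set T}) : vertex_cover r S -> vertex_cover r (S :&: V).
Proof.
move/vertex_coverP=> Scov; apply/vertex_coverP => u v ruv.
by have /andP [Vu Vv] := edges_in_V ruv; rewrite !inE Vu Vv !andbT; apply: Scov.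
Qed.

End CoverIndep.

Lemma bigmin_leq (I : finType) (P : pred I) (F : I -> nat) x i :
  P i -> \big[minn/x]_(j | P j) F j <= F i.
Proof.
have : i \in index_enum I by rewrite mem_index_enum.
rewrite /index_enum; elim: (Finite.enum I) => [//|j s IH]; rewrite inE big_cons.
case/orP => [/eqP <- -> | /IH Hi Pi]; first exact: geq_minl.
by case: (P j); rewrite ?(leq_trans (geq_minr _ _)) ?Hi.
Qed.

Section StrongResolving.
Variables (T : finType) (e : rel T).
Hypotheses (se : symmetric e) (conn : connected_graph e).
Local Notation d := (dist e).
Local Notation mmd := (mutually_max_distant e).
Local Notation bd := (boundary e).

Lemma mmd_sym : symmetric mmd.
Proof. by move=> u v; rewrite /mutually_max_distant eq_sym; congr (_ && _); apply: andbC. Qed.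

Lemma mmd_boundary u v : mmd u v -> (u \in bd) && (v \in bd).
Proof.
by move=> Huv; rewrite !inE; apply/andP; split; apply/existsP; [exists v | exists u; rewrite mmd_sym].
Qed.

Lemma mem_interval u v w : (v \in interval e u w) = (d u v + d v w == d u w).
Proof. by rewrite inE. Qed.

Lemma interval_end u v : v \in interval e u v.
Proof. by rewrite mem_interval dist_xx // addn0. Qed.

Lemma max_distant_interval u v w : max_distant e v u -> v \in interval e u w -> w = v.
Proof.
move=> /forallP Hmd; rewrite mem_interval => /eqP Huvw.
have [//|Hwv] := eqVneq w v; exfalso.
have : d w v != 0 by rewrite dist_eq0.
case Hd: (d w v) => [|n] // _; have [z Hzv Hwz] := dist_last_step conn Hd.
have := implyP (Hmd z); rewrite se Hzv => /(_ isT).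
have := dist_triangle conn u z w; have := dist_sym conn se z w.
have := dist_sym conn se v w; have := dist_sym conn se u v; lia.
Qed.

(* If a neighbour [w] of [x] were farther from [y], it would be farther from
   [v] too (as [v] lies between [x] and [y]), and [u] would lie between [v]
   and [w], contradicting the choice of [x]. *)
Lemma far_end_max_distant v u x y :
  u \in interval e v x -> (forall w, u \in interval e v w -> d v w <= d v x) ->
  v \in interval e x y -> max_distant e x y.
Proof.
rewrite !mem_interval => /eqP vux x_far /eqP xvy; apply/forallP => w; apply/implyP => xw.
rewrite leqNgt; apply/negP => yw_far.
have yw_le := dist_adj_le conn y xw; have vw_le := dist_adj_le conn v xw.
have uw_le := dist_adj_le conn u xw.
have yvw := dist_triangle conn y v w; have vuw := dist_triangle conn v u w.
have sym_yx := dist_sym conn se y x; have sym_yv := dist_sym conn se y v.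
have sym_xv := dist_sym conn se x v.
have : d v w <= d v x by apply: x_far; rewrite mem_interval; apply/eqP; lia.
lia.
Qed.

Lemma exists_far_end v u :
  exists x, u \in interval e v x /\ forall w, u \in interval e v w -> d v w <= d v x.
Proof.
have u_end : u \in interval e v u := interval_end v u.
by case: (arg_maxnP (d v) (P := fun w => u \in interval e v w) u_end) => x Hx Hfar; exists x.
Qed.

Lemma exists_mmd_resolving u v : u != v ->
  exists x y, [/\ mmd x y, strongly_resolves e x u v & strongly_resolves e y u v].
Proof.
move=> neq_uv; have [x [vux x_far]] := exists_far_end v u.
have [y [xvy y_far]] := exists_far_end x v.
exists x, y; have := vux; have := xvy; rewrite !mem_interval => /eqP xvy_eq /eqP vux_eq.
have uvy := dist_triangle conn u v y; have xuy := dist_triangle conn x u y.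
have sym_xu := dist_sym conn se x u; have sym_xv := dist_sym conn se x v.
have sym_uv := dist_sym conn se u v.
have duv_gt0 : d u v != 0 by rewrite dist_eq0.
split.
- rewrite /mutually_max_distant (far_end_max_distant vux x_far xvy).
  rewrite (far_end_max_distant xvy y_far (interval_end y x)) !andbT.
  by rewrite -(dist_eq0 conn); lia.
- by rewrite /strongly_resolves vux orbT.
- by rewrite /strongly_resolves mem_interval; apply/orP; left; apply/eqP; lia.
Qed.

Lemma strong_resolving_setE S : strong_resolving_set e S = vertex_cover mmd S.
Proof.
apply/forallP/vertex_coverP => [Sres u v Huv | Scov u].
  case/and3P: (Huv) => neq_uv md_uv md_vu.
  have /existsP [w /andP [Sw]] := implyP (forallP (Sres u) v) neq_uv.
  case/orP=> [/(max_distant_interval md_vu) | /(max_distant_interval md_uv)] <-.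
    by rewrite Sw orbT.
  by rewrite Sw.
apply/forallP => v; apply/implyP => Huv.
have [x [y [Hxy Hx Hy]]] := exists_mmd_resolving Huv.
by apply/existsP; case/orP: (Scov x y Hxy) => HS; [exists x | exists y]; rewrite HS.
Qed.

Lemma sdim_le_cover S : vertex_cover mmd S -> sdim e <= #|S|.
Proof. by move=> Scov; apply: bigmin_leq; rewrite strong_resolving_setE. Qed.

Lemma sdim_le_boundary : sdim e <= #|bd|.
Proof. by apply: sdim_le_cover; apply/vertex_coverP => u v /mmd_boundary /andP [->]. Qed.

Lemma exists_min_cover :
  exists C : {set T}, [/\ C \subset bd, vertex_cover mmd C & #|C| = sdim e].
Proof.
have setT_cover : vertex_cover mmd setT by apply/vertex_coverP => u v _; rewrite inE.
case: (arg_minnP (fun S : {set T} => #|S|) setT_cover) => C Ccov Cmin.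
have Cbd_cover := vertex_coverI mmd_boundary Ccov.
exists (C :&: bd); split => //; first exact: subsetIr.
apply/eqP; rewrite eqn_leq sdim_le_cover // andbT.
apply: leq_trans (subset_leq_card (subsetIl C bd)) _.
apply: (big_ind (fun k => #|C| <= k)) => [|m n ? ?|S]; first exact: max_card.
  by rewrite leq_min; apply/andP.
by rewrite strong_resolving_setE; apply: Cmin.
Qed.

Lemma indep_card_le (A : {set T}) : A \subset bd -> indep mmd A -> #|A| <= #|bd| - sdim e.
Proof.
move=> Abd Aind; have := sdim_le_cover (cover_setD_indep mmd_boundary Aind).
rewrite cardsD (setIidPr Abd); have := subset_leq_card Abd; lia.
Qed.

Lemma max_distant_neq (ie : irreflexive e) (card_gt1 : 1 < #|T|) u v :
  max_distant e u v -> u != v.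
Proof.
move=> /forallP Hmd; apply/eqP => Huv; subst v.
have [z Huz] := exists_adj conn se card_gt1 u.
move: (implyP (Hmd z) Huz); rewrite dist_xx // leqn0 dist_eq0 // => /eqP Eu.
by rewrite Eu ie in Huz.
Qed.

End StrongResolving.

(** * Independent sets of vertex-transitive graphs *)

Definition closed_nbhd (T : finType) (r : rel T) (V A : {set T}) : {set T} :=
  [set x in V | [exists a in A, (a == x) || r a x]].

Definition automorphism_on (T : finType) (V : {set T}) (r : rel T) (f : {perm T}) :=
  (forall a, a \in V -> f a \in V) /\
  (forall a b, a \in V -> b \in V -> r (f a) (f b) = r a b).

Definition vertex_transitive (T : finType) (V : {set T}) (r : rel T) :=
  forall x y, x \in V -> y \in V -> exists f, automorphism_on V r f /\ f x = y.

Lemma sum_nat_of_bool (T : finType) (X : {set T}) (P : pred T) :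
  \sum_(x in X) (P x : nat) = #|[set x in X | P x]|.
Proof.
rewrite -sum1_card big_mkcond [RHS]big_mkcond; apply: eq_bigr => x _.
by rewrite inE; case: (x \in X); case: (P x).
Qed.

Lemma sum_nat_eq (T : finType) (B : {set T}) y : \sum_(b in B) (y == b : nat) = (y \in B).
Proof.
have [By | nBy] := boolP (y \in B); last first.
  by rewrite big1 // => b Bb; case: eqVneq => // Eyb; rewrite Eyb Bb in nBy.
by rewrite (bigD1 y) //= eqxx big1 // => b /andP [_ /negbTE]; rewrite eq_sym => ->.
Qed.

Lemma card_setI_imset (T : finType) (B X : {set T}) (f : {perm T}) :
  #|B :&: f @: X| = \sum_(x in X) (f x \in B).
Proof.
rewrite sum_nat_of_bool -[RHS](card_imset _ (@perm_inj _ f)); apply: eq_card => y.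
rewrite in_setI; apply/andP/imsetP => [[By /imsetP [x Xx Eyx]] | [x]].
  by exists x; rewrite // inE Xx -Eyx.
by rewrite inE => /andP [Xx Bfx] ->; rewrite Bfx imset_f.
Qed.

Section VertexTransitive.
Variables (T : finType) (r : rel T) (V : {set T}).
Hypotheses (r_sym : symmetric r) (vt : vertex_transitive V r).

Definition auts : {set {perm T}} :=
  [set f : {perm T} | [forall a in V, f a \in V] &&
           [forall a in V, forall b in V, r (f a) (f b) == r a b]].

Lemma autsP f : reflect (automorphism_on V r f) (f \in auts).
Proof.
rewrite inE; apply: (iffP andP) => [[/forall_inP HV /forall_inP Hr] | [HV Hr]].
  by split=> // a b Va Vb; apply/eqP/(forall_inP (Hr a Va)).
split; apply/forall_inP => a Va; first exact: HV.
by apply/forall_inP => b Vb; rewrite Hr.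
Qed.

Lemma auts_mem f a : f \in auts -> a \in V -> f a \in V.
Proof. by move/autsP => [HV _]; apply: HV. Qed.

Lemma auts_rel f a b : f \in auts -> a \in V -> b \in V -> r (f a) (f b) = r a b.
Proof. by move/autsP => [_ Hr]; apply: Hr. Qed.

Lemma auts_mul f g : f \in auts -> g \in auts -> (f * g)%g \in auts.
Proof.
move=> Af Ag; apply/autsP; split=> [a Va | a b Va Vb]; rewrite !permM.
  by rewrite !auts_mem.
by rewrite auts_rel ?auts_mem // auts_rel.
Qed.

Lemma auts_one : 1%g \in auts.
Proof. by apply/autsP; split=> [a | a b]; rewrite !perm1. Qed.

Lemma auts_imset f : f \in auts -> f @: V = V.
Proof.
move=> Af; apply/eqP; rewrite eqEcard card_imset ?leqnn ?andbT; last exact: perm_inj.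
by apply/subsetP => _ /imsetP [a Va ->]; apply: auts_mem.
Qed.

Definition auts_fiber (x b : T) := [set f in auts | f x == b].

(* Composing with automorphisms sending x' to x and b to b' embeds one fiber
   into the other. *)
Lemma card_auts_fiber_le x b x' b' : x \in V -> b \in V -> x' \in V -> b' \in V ->
  #|auts_fiber x b| <= #|auts_fiber x' b'|.
Proof.
move=> Vx Vb Vx' Vb'.
have [g [/autsP Ag gx']] := vt Vx' Vx; have [h [/autsP Ah hb]] := vt Vb Vb'.
rewrite -(card_imset _ (f := fun f => g * f * h)%g); last by move=> f f' /mulIg /mulgI.
apply: subset_leq_card; apply/subsetP => _ /imsetP [f + ->].
rewrite inE => /andP [Af /eqP fx].
by rewrite inE !permM gx' fx hb eqxx !auts_mul.
Qed.

Lemma card_auts_fiber x b x' b' : x \in V -> b \in V -> x' \in V -> b' \in V ->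
  #|auts_fiber x b| = #|auts_fiber x' b'|.
Proof. by move=> *; apply/eqP; rewrite eqn_leq !card_auts_fiber_le. Qed.

Lemma card_auts_to x (B : {set T}) : #|[set f in auts | f x \in B]| = \sum_(b in B) #|auts_fiber x b|.
Proof.
rewrite -(sum_nat_of_bool auts (fun f => f x \in B)).
under [RHS]eq_bigr => b _ do rewrite -(sum_nat_of_bool auts (fun f => f x == b)).
rewrite exchange_big /=; apply: eq_bigr => f _.
by rewrite sum_nat_eq.
Qed.

Variable B : {set T}.
Hypotheses (B_sub : B \subset V) (B_indep : indep r B)
  (B_max : forall A : {set T}, A \subset V -> indep r A -> #|A| <= #|B|).

(* Exchanging the part of [B] hit by [f(N[A])] for [f(A)] keeps [B] independent. *)
Lemma card_indep_le_meet (A : {set T}) f : A \subset V -> indep r A -> f \in auts ->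
  #|A| <= #|B :&: f @: closed_nbhd r V A|.
Proof.
move=> A_sub /indepP A_indep Af; set Y := f @: closed_nbhd r V A.
have Vf a : a \in A -> f a \in V by move/(subsetP A_sub); apply: auts_mem.
have BY_fA z a : z \in B :\: Y -> a \in A -> ~~ r z (f a).
  rewrite inE => /andP [zY Bz] Aa.
  have := subsetP B_sub z Bz; rewrite -(auts_imset Af) => /imsetP [z' Vz' Ez].
  apply: contra zY; rewrite Ez (auts_rel Af Vz' (subsetP A_sub a Aa)) => rz'a.
  by rewrite imset_f // inE Vz'; apply/existsP; exists a; rewrite Aa r_sym rz'a orbT.
have B'_indep : indep r ((B :\: Y) :|: f @: A).
  apply/indepP => z w; rewrite !in_setU.
  case/orP => [Hz | /imsetP [a Aa ->]]; case/orP => [Hw | /imsetP [a' Aa' ->]].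
  - by apply: (indepP _ _ B_indep); [move: Hz | move: Hw]; rewrite inE => /andP [].
  - exact: BY_fA.
  - by rewrite r_sym; apply: BY_fA.
  - by rewrite auts_rel ?(subsetP A_sub) // A_indep.
have B'_sub : (B :\: Y) :|: f @: A \subset V.
  apply/subsetP => z; rewrite !in_setU => /orP [/setDP [Bz _] | /imsetP [a Aa ->]].
    exact: (subsetP B_sub).
  exact: Vf.
have disj : (B :\: Y) :&: f @: A = set0.
  apply/setP => z; rewrite !inE; apply/negP => /andP [/andP [zY _] /imsetP [a Aa Ez]].
  move/negP: zY; apply; rewrite Ez imset_f // inE (subsetP A_sub a Aa).
  by apply/existsP; exists a; rewrite Aa eqxx.
have := B_max B'_sub B'_indep; have := cardsUI (B :\: Y) (f @: A).
rewrite disj cards0 addn0 card_imset; last exact: perm_inj.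
have := cardsID Y B; lia.
Qed.

(* Averaging the previous bound over all automorphisms: each vertex of
   [N[A]] is sent into [B] by the same proportion [#|B| / #|V|] of them. *)
Lemma indep_closed_nbhd_ratio (A : {set T}) : A \subset V -> indep r A ->
  #|A| * #|V| <= #|B| * #|closed_nbhd r V A|.
Proof.
move=> A_sub A_indep; set N := closed_nbhd r V A.
have [V0 | [x0 Vx0]] := set_0Vmem V.
  by move: A_sub; rewrite V0 subset0 => /eqP ->; rewrite cards0.
set c := #|auts_fiber x0 x0|.
have fiber_c x b : x \in V -> b \in V -> #|auts_fiber x b| = c.
  by move=> Vx Vb; apply: card_auts_fiber.
have c_gt0 : 0 < c by apply/card_gt0P; exists 1%g; rewrite inE auts_one perm1 eqxx.
have card_auts : #|auts| = #|V| * c.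
  have -> : auts = [set f in auts | f x0 \in V].
    by apply/setP => f; rewrite inE; case: (boolP (f \in auts)) => // Af; rewrite auts_mem.
  by rewrite card_auts_to -sum_nat_const; apply: eq_bigr => b Vb; apply: fiber_c.
have sum_meet : \sum_(f in auts) #|B :&: f @: N| = #|N| * (#|B| * c).
  under eq_bigr => f _ do rewrite card_setI_imset.
  rewrite exchange_big /= -sum_nat_const; apply: eq_bigr => x Nx.
  rewrite sum_nat_of_bool card_auts_to -sum_nat_const; apply: eq_bigr => b Bb.
  by apply: fiber_c; [move: Nx; rewrite inE => /andP [] | apply: (subsetP B_sub)].
have : \sum_(f in auts) #|A| <= \sum_(f in auts) #|B :&: f @: N|.
  by apply: leq_sum => f; apply: card_indep_le_meet.
rewrite sum_nat_const sum_meet card_auts -(leq_pmul2r c_gt0); nia.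
Qed.

End VertexTransitive.

Lemma SR_indep_ratio (T : finType) (e : rel T) :
  symmetric e -> connected_graph e -> SR_vertex_transitive e ->
  forall A : {set T}, A \subset boundary e -> indep (mutually_max_distant e) A ->
  #|A| * #|boundary e| <=
    (#|boundary e| - sdim e) * #|closed_nbhd (mutually_max_distant e) (boundary e) A|.
Proof.
move=> se conn vt A A_sub A_indep.
have [C [C_sub C_cover C_card]] := exists_min_cover se conn.
have card_B : #|boundary e :\: C| = #|boundary e| - sdim e.
  by rewrite cardsD (setIidPr C_sub) C_card.
(* [vt] unfolds to [vertex_transitive (boundary e) (mutually_max_distant e)]. *)
rewrite -card_B; apply: (indep_closed_nbhd_ratio (@mmd_sym _ e) vt) => //.
- exact: subsetDl.
- exact: indep_setD_cover.
- by move=> A' A'_sub A'_indep; rewrite card_B indep_card_le.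
Qed.

(** * Independent sets of direct products *)

Definition rel_prod (T1 T2 : Type) (r1 : rel T1) (r2 : rel T2) : rel (T1 * T2) :=
  fun x y => r1 x.1 y.1 && r2 x.2 y.2.

Lemma eq_indep (T : finType) (r r' : rel T) (A : {set T}) :
  r =2 r' -> indep r A = indep r' A.
Proof. by move=> Er; apply: eq_forallb_in => a _; apply: eq_forallb_in => b _; rewrite Er. Qed.

Lemma eq_vertex_cover (T : finType) (r r' : rel T) (S : {set T}) :
  r =2 r' -> vertex_cover r S = vertex_cover r' S.
Proof. by move=> Er; apply: eq_forallb => u; apply: eq_forallb => v; rewrite Er. Qed.

Section ProductCover.
Variables (T1 T2 : finType) (r1 : rel T1) (r2 : rel T2) (V1 : {set T1}) (V2 : {set T2}).

Lemma vertex_cover_setX_l C1 : vertex_cover r1 C1 ->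
  (forall u v, r2 u v -> (u \in V2) && (v \in V2)) ->
  vertex_cover (rel_prod r1 r2) (setX C1 V2).
Proof.
move=> /vertex_coverP C1_cover edges2; apply/vertex_coverP => u v /andP [r1uv r2uv].
have /andP [V2u V2v] := edges2 _ _ r2uv.
by rewrite !inE V2u V2v !andbT; apply: C1_cover.
Qed.

Lemma vertex_cover_setX_r C2 : vertex_cover r2 C2 ->
  (forall u v, r1 u v -> (u \in V1) && (v \in V1)) ->
  vertex_cover (rel_prod r1 r2) (setX V1 C2).
Proof.
move=> /vertex_coverP C2_cover edges1; apply/vertex_coverP => u v /andP [r1uv r2uv].
have /andP [V1u V1v] := edges1 _ _ r1uv.
by rewrite !inE V1u V1v /=; apply: C2_cover.
Qed.

End ProductCover.

Section Fibers.
Variables (T1 T2 : finType) (J : {set T1 * T2}).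

Lemma card_pairs : #|J| = \sum_g \sum_h (if (g, h) \in J then 1 else 0).
Proof.
by rewrite pair_bigA -sum1_card big_mkcond; apply: eq_bigr => -[g h].
Qed.

Lemma card_fibers_fst : #|J| = \sum_g #|[set h | (g, h) \in J]|.
Proof.
rewrite card_pairs; apply: eq_bigr => g _.
by rewrite -sum1_card [RHS]big_mkcond; apply: eq_bigr => h _; rewrite inE.
Qed.

Lemma card_fibers_snd : #|J| = \sum_h #|[set g | (g, h) \in J]|.
Proof.
rewrite card_pairs exchange_big; apply: eq_bigr => h _.
by rewrite -sum1_card [RHS]big_mkcond; apply: eq_bigr => g _; rewrite inE.
Qed.

End Fibers.

Section DirectProductIndep.
Variables (T1 T2 : finType) (r1 : rel T1) (r2 : rel T2) (V1 : {set T1}) (V2 : {set T2}).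
Variables (a1 a2 : nat).
Hypotheses (r1_sym : symmetric r1) (r2_sym : symmetric r2).
Hypothesis ratio1 : forall A : {set T1}, A \subset V1 -> indep r1 A ->
  #|A| * #|V1| <= a1 * #|closed_nbhd r1 V1 A|.
Hypothesis ratio2 : forall A : {set T2}, A \subset V2 -> indep r2 A ->
  #|A| * #|V2| <= a2 * #|closed_nbhd r2 V2 A|.
Variable I : {set T1 * T2}.
Hypotheses (I_sub : I \subset setX V1 V2) (I_indep : indep (rel_prod r1 r2) I).

(* [I] splits into the points having an [r1]-neighbour in [I] within their
   [V1]-fibre and the others; the fibres of each part are independent. *)
Let I_adj := [set x in I | [exists g, r1 g x.1 && ((g, x.2) \in I)]].
Let I_rest := I :\: I_adj.
Let col h := [set g | (g, h) \in I_rest].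
Let row g := [set h | (g, h) \in I_adj].
Let R1 := [set x | x.1 \in closed_nbhd r1 V1 (col x.2)].
Let R2 := [set x | x.2 \in closed_nbhd r2 V2 (row x.1)].

Lemma I_mem x : x \in I -> (x.1 \in V1) && (x.2 \in V2).
Proof. by move/(subsetP I_sub); rewrite inE. Qed.

Lemma I_nadj x y : x \in I -> y \in I -> r1 x.1 y.1 -> ~~ r2 x.2 y.2.
Proof. by move=> Ix Iy r1xy; have := indepP _ _ I_indep x y Ix Iy; rewrite /rel_prod r1xy. Qed.

Lemma col_sub h : col h \subset V1.
Proof. by apply/subsetP => g; rewrite !inE => /andP [_ /I_mem /andP []]. Qed.

Lemma col_indep h : indep r1 (col h).
Proof.
apply/indepP => g g'; rewrite !inE => /andP [Iadj Ig] /andP [_ Ig'].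
apply: contra Iadj => rgg'; rewrite Ig; apply/existsP; exists g'.
by rewrite r1_sym rgg' Ig'.
Qed.

Lemma row_sub g : row g \subset V2.
Proof. by apply/subsetP => h; rewrite !inE => /andP [/I_mem /andP [_ ->]]. Qed.

Lemma row_indep g : indep r2 (row g).
Proof.
apply/indepP => h h'; rewrite !inE => /andP [_ /existsP [g' /andP [rg'g Ig'h]]] /andP [Igh' _].
exact: (I_nadj Ig'h Igh').
Qed.

Lemma R1_R2_disjoint : R1 :&: R2 = set0.
Proof.
apply/setP => -[g h]; rewrite !inE /=; apply/negP.
case/andP=> /andP [_ /existsP [g0 /andP [Hg0 Hgg]]] /andP [_ /existsP [h0 /andP [Hh0 Hhh]]].
move: Hg0 Hh0; rewrite !inE /= => /andP [nadj Ig0h] /andP [Igh0 adj].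
case/orP: Hgg => [/eqP Eg | rg0g]; case/orP: Hhh => [/eqP Eh | rh0h].
- by move: nadj; rewrite Eg -Eh Igh0 adj.
- move: adj; rewrite -Eg => /existsP [g' /andP [rg'g0 Ig'h0]].
  by have := I_nadj Ig'h0 Ig0h rg'g0; rewrite /= rh0h.
- move: nadj; rewrite Ig0h -Eh /= => /existsPn /(_ g).
  by rewrite r1_sym rg0g Igh0.
- by have := I_nadj Ig0h Igh0 rg0g; rewrite /= r2_sym rh0h.
Qed.

Lemma R1_R2_sub : R1 :|: R2 \subset setX V1 V2.
Proof.
apply/subsetP => -[g h]; rewrite !inE /= => /orP [] /andP [Vx /existsP [a /andP [Ha _]]].
  by rewrite Vx; move: Ha; rewrite !inE => /andP [_ /I_mem /andP [_ ->]].
by rewrite Vx andbT; move: Ha; rewrite !inE => /andP [/I_mem /andP [->]].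
Qed.

Lemma card_I_rest : #|I_rest| * #|V1| <= a1 * #|R1|.
Proof.
rewrite card_fibers_snd (card_fibers_snd R1) big_distrl big_distrr /=.
apply: leq_sum => h _; apply: leq_trans (ratio1 (col_sub h) (col_indep h)) _.
by apply: eq_leq; congr (_ * _); apply: eq_card => g; rewrite !inE.
Qed.

Lemma card_I_adj : #|I_adj| * #|V2| <= a2 * #|R2|.
Proof.
rewrite card_fibers_fst (card_fibers_fst R2) big_distrl big_distrr /=.
apply: leq_sum => g _; apply: leq_trans (ratio2 (row_sub g) (row_indep g)) _.
by apply: eq_leq; congr (_ * _); apply: eq_card => h; rewrite !inE.
Qed.

Lemma card_indep_rel_prod : #|I| <= maxn (a1 * #|V2|) (a2 * #|V1|).
Proof.
set M := maxn _ _.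
have [n12_0 | n12_gt0] := posnP (#|V1| * #|V2|).
  by have := subset_leq_card I_sub; rewrite cardsX n12_0 leqn0 => /eqP ->.
rewrite -(leq_pmul2r n12_gt0).
have card_R : #|R1| + #|R2| <= #|V1| * #|V2|.
  have := cardsUI R1 R2; rewrite R1_R2_disjoint cards0 addn0 => <-.
  by rewrite -cardsX subset_leq_card // R1_R2_sub.
have card_I : #|I| = #|I_rest| + #|I_adj|.
  have adj_sub : I_adj \subset I by apply/subsetP => x; rewrite inE => /andP [].
  by rewrite -(cardsID I_adj I) (setIidPr adj_sub) addnC.
have M1 : a1 * #|V2| <= M := leq_maxl _ _.
have M2 : a2 * #|V1| <= M := leq_maxr _ _.
have := card_I_rest; have := card_I_adj.
have := leq_mul M1 (leqnn #|R1|); have := leq_mul M2 (leqnn #|R2|).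
have := leq_mul (leqnn M) card_R.
rewrite card_I; nia.
Qed.

End DirectProductIndep.

(** * The Cartesian product *)

Lemma leq_min_subn_max n1 n2 s1 s2 k : s1 <= n1 -> s2 <= n2 ->
  n1 * n2 - k <= maxn ((n1 - s1) * n2) ((n2 - s2) * n1) -> minn (n1 * s2) (n2 * s1) <= k.
Proof.
move=> le1 le2; have := leq_mul (leqnn n1) le2; have := leq_mul le1 (leqnn n2).
by rewrite !mulnBl (mulnC n2 n1) (mulnC s1) (mulnC s2); lia.
Qed.

Section CartesianProduct.
Variables (T1 T2 : finType) (e1 : rel T1) (e2 : rel T2).
Hypotheses (se1 : symmetric e1) (conn1 : connected_graph e1).
Hypotheses (se2 : symmetric e2) (conn2 : connected_graph e2).
Local Notation e := (cart_prod e1 e2).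

Lemma cart_prod_sym : symmetric e.
Proof. by move=> [a b] [c d]; rewrite /cart_prod /= se1 se2 (eq_sym a) (eq_sym b). Qed.

Lemma ball_cart_prod_l a b c n : c \in ball e1 a n -> (c, b) \in ball e (a, b) n.
Proof.
elim: n c => [|n IH] c; first by rewrite !mem_ball0 => /eqP ->.
rewrite mem_ballS => /orP [/IH /(ball_mono (leqnSn _)) //|].
by case/existsP => z /andP [/IH Hz Hzc]; apply: ball_adj Hz _; rewrite /cart_prod /= Hzc eqxx orbT.
Qed.

Lemma ball_cart_prod_r a b d n : d \in ball e2 b n -> (a, d) \in ball e (a, b) n.
Proof.
elim: n d => [|n IH] d; first by rewrite !mem_ball0 => /eqP ->.
rewrite mem_ballS => /orP [/IH /(ball_mono (leqnSn _)) //|].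
by case/existsP => z /andP [/IH Hz Hzd]; apply: ball_adj Hz _; rewrite /cart_prod /= Hzd eqxx.
Qed.

Lemma ball_cart_prod x y : y \in ball e x (dist e1 x.1 y.1 + dist e2 x.2 y.2).
Proof.
case: x y => [a b] [c d]; apply: (@ball_trans _ _ _ (c, b)).
  exact/ball_cart_prod_l/dist_ball.
exact/ball_cart_prod_r/dist_ball.
Qed.

Lemma cart_prod_connected : connected_graph e.
Proof. by move=> x y; apply: ball_connect (ball_cart_prod x y). Qed.

Lemma ball_cart_prod_dist x y n :
  y \in ball e x n -> dist e1 x.1 y.1 + dist e2 x.2 y.2 <= n.
Proof.
elim: n y => [|n IH] y; first by rewrite mem_ball0 => /eqP ->; rewrite !dist_xx.
rewrite mem_ballS => /orP [/IH le_n|/existsP [z /andP [/IH Hz Hzy]]]; first lia.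
have := dist_triangle conn1 x.1 z.1 y.1; have := dist_triangle conn2 x.2 z.2 y.2.
case/orP: Hzy => /andP [/eqP E Hzy].
  have := dist_adj_le conn2 z.2 Hzy; have : dist e1 z.1 y.1 = 0 by rewrite E dist_xx.
  rewrite dist_xx //; lia.
have := dist_adj_le conn1 z.1 Hzy; have : dist e2 z.2 y.2 = 0 by rewrite E dist_xx.
rewrite dist_xx //; lia.
Qed.

Lemma dist_cart_prod x y : dist e x y = dist e1 x.1 y.1 + dist e2 x.2 y.2.
Proof.
have conn := cart_prod_connected.
apply/eqP; rewrite eqn_leq dist_leE // ball_cart_prod.
exact/ball_cart_prod_dist/dist_ball.
Qed.

Lemma max_distant_cart_prod u v :
  max_distant e u v = max_distant e1 u.1 v.1 && max_distant e2 u.2 v.2.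
Proof.
case: u v => [u1 u2] [v1 v2] /=.
have du1 := dist_sym conn1 se1 v1 u1; have du2 := dist_sym conn2 se2 v2 u2.
apply/forallP/andP => [Hmd | [/forallP Hmd1 /forallP Hmd2] [w1 w2]].
  split; apply/forallP => w; apply/implyP => Hw.
    have := implyP (Hmd (w, u2)); rewrite /cart_prod /= Hw eqxx orbT !dist_cart_prod /=.
    by move=> /(_ isT); lia.
  have := implyP (Hmd (u1, w)); rewrite /cart_prod /= Hw eqxx /= !dist_cart_prod /=.
  by move=> /(_ isT); lia.
apply/implyP; rewrite /cart_prod !dist_cart_prod /= => /orP [] /andP [/eqP <- Hw].
  by have := implyP (Hmd2 w2) Hw; lia.
by have := implyP (Hmd1 w1) Hw; lia.
Qed.

Hypotheses (ie1 : irreflexive e1) (card1_gt1 : 1 < #|T1|).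
Hypotheses (ie2 : irreflexive e2) (card2_gt1 : 1 < #|T2|).

Lemma mmd_cart_prod u v : mutually_max_distant e u v =
  rel_prod (mutually_max_distant e1) (mutually_max_distant e2) u v.
Proof.
rewrite /rel_prod /mutually_max_distant !max_distant_cart_prod.
have [md1|] := boolP (max_distant e1 u.1 v.1); rewrite ?andbF //=.
have [md2|] := boolP (max_distant e2 u.2 v.2); rewrite ?andbF //=.
have neq1 := max_distant_neq se1 conn1 ie1 card1_gt1 md1.
have neq2 := max_distant_neq se2 conn2 ie2 card2_gt1 md2.
have neq : u != v by apply: contraNneq neq1 => ->.
by rewrite neq neq1 neq2 /=; case: (max_distant e1 v.1 u.1).
Qed.

Lemma sdim_cart_prod_le_l : sdim e <= #|boundary e1| * sdim e2.
Proof.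
have [C2 [_ C2_cover <-]] := exists_min_cover se2 conn2.
rewrite -cardsX; apply: sdim_le_cover cart_prod_sym cart_prod_connected _ _.
rewrite (eq_vertex_cover _ mmd_cart_prod) vertex_cover_setX_r //; exact: mmd_boundary.
Qed.

Lemma sdim_cart_prod_le_r : sdim e <= #|boundary e2| * sdim e1.
Proof.
have [C1 [_ C1_cover <-]] := exists_min_cover se1 conn1.
rewrite mulnC -cardsX; apply: sdim_le_cover cart_prod_sym cart_prod_connected _ _.
rewrite (eq_vertex_cover _ mmd_cart_prod) vertex_cover_setX_l //; exact: mmd_boundary.
Qed.

Hypotheses (vt1 : SR_vertex_transitive e1) (vt2 : SR_vertex_transitive e2).

(* A minimum cover [S] of the product leaves the independent set
   [(∂G × ∂H) \ S], which Zhang's bound controls. *)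
Lemma sdim_cart_prod_ge :
  minn (#|boundary e1| * sdim e2) (#|boundary e2| * sdim e1) <= sdim e.
Proof.
have [S [_ S_cover <-]] := exists_min_cover cart_prod_sym cart_prod_connected.
set X := setX (boundary e1) (boundary e2).
have rest_indep : indep (rel_prod (mutually_max_distant e1) (mutually_max_distant e2)) (X :\: S).
  by rewrite -(eq_indep _ mmd_cart_prod); apply: indep_setD_cover.
have := card_indep_rel_prod (@mmd_sym _ e1) (@mmd_sym _ e2)
  (SR_indep_ratio se1 conn1 vt1) (SR_indep_ratio se2 conn2 vt2) (subsetDl _ _) rest_indep.
rewrite cardsD cardsX => rest_le; apply: leq_trans (subset_leq_card (subsetIr X S)).
by apply: leq_min_subn_max rest_le; apply: sdim_le_boundary.
Qed.

End CartesianProduct.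

Theorem theorem14 (T1 T2 : finType) (e1 : rel T1) (e2 : rel T2) :
  simple_graph e1 -> simple_graph e2 ->
  connected_graph e1 -> connected_graph e2 ->
  1 < #|T1| -> 1 < #|T2| ->
  SR_vertex_transitive e1 -> SR_vertex_transitive e2 ->
  sdim (cart_prod e1 e2) =
    minn (#|boundary e1| * sdim e2) (#|boundary e2| * sdim e1).
Proof.
move=> [se1 ie1] [se2 ie2] conn1 conn2 card1 card2 vt1 vt2.
apply/eqP; rewrite eqn_leq leq_min.
by rewrite sdim_cart_prod_le_l ?sdim_cart_prod_le_r ?sdim_cart_prod_ge.
Qed.
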